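(* Let $\ell \geq 3$ be an integer. Let $A=(a_{ij})_{1\le i\le \ell,\,1\le j\le 2}$ and $B=(b_{ij})_{1\le i\le \ell,\,1\le j\le 2}$ be $\ell\times 2$ real matrices all of whose entries are non-zero, with $\operatorname{rank} A = \operatorname{rank} B = 2$. Then there exist proper algebraic subsets $\Sigma_A, \Sigma_B \subset (\mathbb{R}^2)^\ell$ such that for every $p\in (\mathbb{R}^2)^\ell\setminus \Sigma_A$ and every $q\in(\mathbb{R}^2)^\ell\setminus\Sigma_B$, the mapping $G_{(p,A)}$ is $\mathcal{A}$-equivalent to the mapping $G_{(q,B)}$.
   Context: For a point $p=(p_1,\dots,p_\ell)\in(\mathbb{R}^2)^\ell$ with $p_i=(p_{i1},p_{i2})$ and an $\ell\times 2$ matrix $A=(a_{ij})$ with non-zero entries, the generalized distance-squared mapping $G_{(p,A)}:\mathbb{R}^2\to\mathbb{R}^\ell$ is $G_{(p,A)}(x_1,x_2)=\big(\sum_{j=1}^2 a_{1j}(x_j-p_{1j})^2,\ \dots,\ \sum_{j=1}^2 a_{\ell j}(x_j-p_{\ell j})^2\big)$. Two smooth maps $f,g:\mathbb{R}^2\to\mathbb{R}^\ell$ are $\mathcal{A}$-equivalent if there are ($C^\infty$) diffeomorphisms $h:\mathbb{R}^2\to\mathbb{R}^2$ and $H:\mathbb{R}^\ell\to\mathbb{R}^\ell$ with $f=H\circ g\circ h^{-1}$. *)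

From Stdlib Require Import Reals List.
Open Scope R_scope.

Definition Idx (n : nat) : Type := { i : nat | (i < n)%nat }.
Definition Vec (n : nat) : Type := Idx n -> R.

Definition j0 : Idx 2 := exist _ 0%nat (le_S _ _ (le_n 1)).
Definition j1 : Idx 2 := exist _ 1%nat (le_n 2).

Definition shift {n : nat} (x : Vec n) (i : Idx n) (t : R) : Vec n :=
  fun k => if Nat.eq_dec (proj1_sig k) (proj1_sig i) then x k + t else x k.

(** Continuity of f : R^n -> R (sup-norm, equivalent to Euclidean). *)
Definition cont {n : nat} (f : Vec n -> R) : Prop :=
  forall (x : Vec n) (eps : R), 0 < eps ->
    exists delta, 0 < delta /\
      forall y : Vec n, (forall k, Rabs (y k - x k) < delta) ->
        Rabs (f y - f x) < eps.

Definition partial_lim {n : nat} (f : Vec n -> R) (i : Idx n) (x : Vec n) (l : R) : Prop :=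
  derivable_pt_lim (fun t => f (shift x i t)) 0 l.

Inductive Ck {n : nat} : nat -> (Vec n -> R) -> Prop :=
| Ck_0 : forall f, cont f -> Ck 0 f
| Ck_S : forall k f, cont f ->
    (forall i : Idx n, exists g : Vec n -> R,
        (forall x, partial_lim f i x (g x)) /\ Ck k g) ->
    Ck (S k) f.

Definition smooth_fun {n : nat} (f : Vec n -> R) : Prop := forall k, Ck k f.
Definition smooth {n m : nat} (F : Vec n -> Vec m) : Prop :=
  forall i : Idx m, smooth_fun (fun x => F x i).

Definition diffeo_with_inverse {n : nat} (h hinv : Vec n -> Vec n) : Prop :=
  smooth h /\ smooth hinv /\ (forall x, h (hinv x) = x) /\ (forall x, hinv (h x) = x).

Definition A_equivalent {n m : nat} (f g : Vec n -> Vec m) : Prop :=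
  exists (h hinv : Vec n -> Vec n) (H Hinv : Vec m -> Vec m),
    diffeo_with_inverse h hinv /\ diffeo_with_inverse H Hinv /\
    forall x, f x = H (g (hinv x)).

Definition G {l : nat} (p : Idx l -> Vec 2) (A : Idx l -> Idx 2 -> R) : Vec 2 -> Vec l :=
  fun x i => A i j0 * (x j0 - p i j0) ^ 2 + A i j1 * (x j1 - p i j1) ^ 2.

(** rank A = 2 for an l x 2 matrix: its two columns are linearly independent. *)
Definition rank2 {l : nat} (A : Idx l -> Idx 2 -> R) : Prop :=
  forall c0 c1 : R, (forall i, c0 * A i j0 + c1 * A i j1 = 0) -> c0 = 0 /\ c1 = 0.

Inductive poly (V : Type) : Type :=
| PVar : V -> poly V
| PConst : R -> poly V
| PAdd : poly V -> poly V -> poly V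
| PMul : poly V -> poly V -> poly V.
Arguments PVar {V}. Arguments PConst {V}. Arguments PAdd {V}. Arguments PMul {V}.

Fixpoint peval {V : Type} (e : V -> R) (P : poly V) : R :=
  match P with
  | PVar v => e v
  | PConst c => c
  | PAdd P Q => peval e P + peval e Q
  | PMul P Q => peval e P * peval e Q
  end.

Definition algebraic_subset {l : nat} (S : (Idx l -> Vec 2) -> Prop) : Prop :=
  exists Ps : list (poly (Idx l * Idx 2)),
    forall p, S p <-> Forall (fun P => peval (fun v => p (fst v) (snd v)) P = 0) Ps.

Definition proper_algebraic_subset {l : nat} (S : (Idx l -> Vec 2) -> Prop) : Prop :=
  algebraic_subset S /\ exists p, ~ S p.

(* G_(p,A)(x) = K(p,A) (x0^2, x1^2, x0, x1) + c(p,A) for an l x 4 matrix K(p,A) affine in p.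
   For l >= 4, as soon as a fixed 4 x 4 row-minor of both K(p,A) and K(q,B) is nonzero, some
   invertible T satisfies T K(q,B) = K(p,A), so G_(p,A) and G_(q,B) differ by an affine change of
   the target.  For l = 3, the signed 3 x 3 minors v of K(p,A) form a kernel vector; when v2 v3 <> 0,
   rescaling and translating the source turns G_(p,A) into an invertible affine image of
   (z0^2, z1^2, z0 + z1).  In both cases the exceptional set is the zero set of one polynomial
   in p, which is not identically zero because the entries of A are nonzero and rank A = 2. *)

From Pilot Require Import Defs.
From Stdlib Require Import Reals Lra FunctionalExtensionality Arith.Peano_dec.
Set Warnings "-notation-overridden -ambiguous-paths".
From mathcomp Require Import all_boot all_algebra Rstruct ring.
Import GRing.Theory Num.Theory.

Lemma cont_const n (c : R) : @cont n (fun _ => c).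
Proof.
move=> x eps eps_gt0; exists 1; split; first lra.
by move=> y _; rewrite Rminus_diag Rabs_R0.
Qed.

Lemma cont_coord n (j : Idx n) : @cont n (fun y => y j).
Proof. by move=> x eps eps_gt0; exists eps; split=> // y; apply. Qed.

Lemma cont_add n (f g : Vec n -> R) : cont f -> cont g -> cont (fun y => f y + g y).
Proof.
move=> cf cg x eps eps_gt0.
have [d1 [d1_gt0 Hf]] := cf x (eps / 2) ltac:(lra).
have [d2 [d2_gt0 Hg]] := cg x (eps / 2) ltac:(lra).
exists (Rmin d1 d2); split; first exact: Rmin_pos.
move=> y Hy.
have /Hf ? : forall k, Rabs (y k - x k) < d1.
  by move=> k; have := Hy k; have := Rmin_l d1 d2; lra.
have /Hg ? : forall k, Rabs (y k - x k) < d2.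
  by move=> k; have := Hy k; have := Rmin_r d1 d2; lra.
have -> : f y + g y - (f x + g x) = (f y - f x) + (g y - g x) by lra.
have := Rabs_triang (f y - f x) (g y - g x); lra.
Qed.

Lemma cont_scale n (c : R) (f : Vec n -> R) : cont f -> cont (fun y => c * f y).
Proof.
move=> cf x eps eps_gt0.
have [-> | c_neq0] := Req_dec c 0.
  by exists 1; split=> [|y _]; [lra | rewrite !Rmult_0_l Rminus_diag Rabs_R0].
have c_gt0 : 0 < Rabs c by apply: Rabs_pos_lt.
have [d [d_gt0 Hf]] := cf x (eps / Rabs c) (Rdiv_lt_0_compat _ _ eps_gt0 c_gt0).
exists d; split=> // y /Hf Hy.
rewrite -Rmult_minus_distr_l Rabs_mult.
have -> : eps = Rabs c * (eps / Rabs c).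
  by rewrite /Rdiv Rmult_comm Rmult_assoc Rinv_l ?Rmult_1_r; lra.
exact: Rmult_lt_compat_l.
Qed.

Lemma Ck_const n k (c : R) : Ck (n := n) k (fun _ => c).
Proof.
elim: k c => [|k IHk] c; constructor; try exact: cont_const.
move=> i; exists (fun _ => 0); split=> [x|]; [exact: derivable_pt_lim_const | exact: IHk].
Qed.

Lemma Ck_coord n k (j : Idx n) : Ck k (fun y : Vec n => y j).
Proof.
case: k => [|k]; constructor; try exact: cont_coord.
move=> i; exists (fun _ => if Nat.eq_dec (proj1_sig j) (proj1_sig i) then 1 else 0).
split=> [x|]; last exact: Ck_const.
rewrite /partial_lim /shift.
destruct (Nat.eq_dec (proj1_sig j) (proj1_sig i)); last exact: derivable_pt_lim_const.
rewrite -(Rplus_0_l 1).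
exact: derivable_pt_lim_plus (derivable_pt_lim_const _ _) (derivable_pt_lim_id _).
Qed.

Lemma Ck_add n k (f g : Vec n -> R) : Ck k f -> Ck k g -> Ck k (fun y => f y + g y).
Proof.
elim: k f g => [|k IHk] f g Cf Cg.
  by inversion Cf; inversion Cg; constructor; apply: cont_add.
inversion Cf as [|? ? cf Df]; inversion Cg as [|? ? cg Dg]; subst.
constructor=> [|i]; first exact: cont_add.
have [f' [Hf' Cf']] := Df i; have [g' [Hg' Cg']] := Dg i.
exists (fun y => f' y + g' y); split=> [x|]; last exact: IHk.
exact: (derivable_pt_lim_plus (fun t => f (shift x i t)) (fun t => g (shift x i t)) _ _ _ (Hf' x) (Hg' x)).
Qed.

Lemma Ck_scale n k (c : R) (f : Vec n -> R) : Ck k f -> Ck k (fun y => c * f y).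
Proof.
elim: k f => [|k IHk] f Cf.
  by inversion Cf; constructor; apply: cont_scale.
inversion Cf as [|? ? cf Df]; subst.
constructor=> [|i]; first exact: cont_scale.
have [f' [Hf' Cf']] := Df i.
exists (fun y => c * f' y); split=> [x|]; last exact: IHk.
exact: (derivable_pt_lim_scal (fun t => f (shift x i t)) _ _ _ (Hf' x)).
Qed.

Local Open Scope ring_scope.

Definition ord_of_idx {n} (i : Idx n) : 'I_n := Ordinal (introT ltP (proj2_sig i)).
Definition idx_of_ord {n} (i : 'I_n) : Idx n := exist _ (val i) (elimT ltP (ltn_ord i)).

Lemma ord_of_idxK n : cancel (@ord_of_idx n) idx_of_ord.
Proof. by case=> m lt_m_n; congr exist; apply: le_unique. Qed.

Lemma idx_of_ordK n : cancel (@idx_of_ord n) ord_of_idx.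
Proof. by move=> i; apply: val_inj. Qed.

Definition col_of_vec {n} (y : Vec n) : 'cV[R]_n := \col_i y (idx_of_ord i).
Definition vec_of_col {n} (v : 'cV[R]_n) : Vec n := fun i => v (ord_of_idx i) 0.

Lemma col_of_vecK n : cancel (@col_of_vec n) vec_of_col.
Proof. by move=> y; apply: functional_extensionality => i; rewrite /vec_of_col mxE ord_of_idxK. Qed.

Lemma vec_of_colK n : cancel (@vec_of_col n) col_of_vec.
Proof. by move=> v; apply/matrixP => i j; rewrite mxE /vec_of_col idx_of_ordK (ord1 j). Qed.

Definition aff {n} (T : 'M[R]_n) (c : 'cV[R]_n) (y : Vec n) : Vec n :=
  vec_of_col (c + T *m col_of_vec y).

Lemma aff_comp n (T T' : 'M[R]_n) c c' y :
  aff T c (aff T' c' y) = aff (T *m T') (c + T *m c') y.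
Proof. by rewrite /aff vec_of_colK mulmxDr mulmxA addrA. Qed.

Lemma aff1 n (y : Vec n) : aff 1%:M 0 y = y.
Proof. by rewrite /aff mul1mx add0r col_of_vecK. Qed.

Lemma affE n (T : 'M[R]_n) c y i :
  aff T c y i = c (ord_of_idx i) 0 + \sum_j T (ord_of_idx i) j * y (idx_of_ord j).
Proof. by rewrite /aff /vec_of_col !mxE; congr (_ + _); apply: eq_bigr => j _; rewrite mxE. Qed.

Lemma aff_invr n (T : 'M[R]_n) c y : T \in unitmx ->
  aff T c (aff (invmx T) (- (invmx T *m c)) y) = y.
Proof. by move=> Tu; rewrite aff_comp mulmxV // mulmxN mulmxA mulmxV // mul1mx subrr aff1. Qed.

Lemma aff_invl n (T : 'M[R]_n) c y : T \in unitmx ->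
  aff (invmx T) (- (invmx T *m c)) (aff T c y) = y.
Proof. by move=> Tu; rewrite aff_comp mulVmx // addNr aff1. Qed.

Lemma Ck_linear_form n k (a : 'I_n -> R) (s : seq 'I_n) :
  Ck k (fun y : Vec n => \sum_(j <- s) a j * y (idx_of_ord j)).
Proof.
elim: s => [|j s IHs].
  under [X in Ck k X]functional_extensionality do rewrite big_nil.
  exact: Ck_const.
under [X in Ck k X]functional_extensionality do rewrite big_cons.
by apply: Ck_add IHs; apply: Ck_scale; apply: Ck_coord.
Qed.

Lemma smooth_aff n (T : 'M[R]_n) c : smooth (aff T c).
Proof.
move=> i k; under [X in Ck k X]functional_extensionality do rewrite affE.
by apply: Ck_add; [apply: Ck_const | apply: Ck_linear_form].
Qed.

Lemma diffeo_aff n (T : 'M[R]_n) c : T \in unitmx ->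
  diffeo_with_inverse (aff T c) (aff (invmx T) (- (invmx T *m c))).
Proof.
move=> Tu; split; first exact: smooth_aff.
split; first exact: smooth_aff.
by split=> y; [apply: aff_invr | apply: aff_invl].
Qed.

Definition affine_equiv {n m} (f g : Vec n -> Vec m) : Prop :=
  exists (T : 'M[R]_m) c (U : 'M[R]_n) e,
    [/\ T \in unitmx, U \in unitmx & forall x, f (aff U e x) = aff T c (g x)].

Lemma affine_equiv_A_equivalent n m (f g : Vec n -> Vec m) :
  affine_equiv f g -> A_equivalent f g.
Proof.
case=> T [c [U [e [Tu Uu fg]]]].
exists (aff U e), (aff (invmx U) (- (invmx U *m e))).
exists (aff T c), (aff (invmx T) (- (invmx T *m c))).
split; [exact: diffeo_aff | split; [exact: diffeo_aff|]].
by move=> x; rewrite -fg aff_invr.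
Qed.

Lemma affine_equiv_sym n m (f g : Vec n -> Vec m) : affine_equiv f g -> affine_equiv g f.
Proof.
case=> T [c [U [e [Tu Uu fg]]]].
exists (invmx T), (- (invmx T *m c)), (invmx U), (- (invmx U *m e)).
split; rewrite ?unitmx_inv // => x.
by rewrite -[in RHS](aff_invr _ U e x Uu) fg aff_invl.
Qed.

Lemma affine_equiv_trans n m (f g h : Vec n -> Vec m) :
  affine_equiv f g -> affine_equiv g h -> affine_equiv f h.
Proof.
case=> T [c [U [e [Tu Uu fg]]]] [T' [c' [U' [e' [T'u U'u gh]]]]].
exists (T *m T'), (c + T *m c'), (U *m U'), (e + U *m e').
split; rewrite ?unitmx_mul ?Tu ?T'u ?Uu ?U'u // => x.
by rewrite -aff_comp fg gh aff_comp.
Qed.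

Section SmallDeterminants.
Variable K : comNzRingType.

Lemma mx_inord n (M : 'M[K]_n.+1) : M = \matrix_(i, j) M (inord i) (inord j).
Proof. by apply/matrixP => i j; rewrite mxE !inord_val. Qed.

Lemma det2 (M : 'M[K]_2) :
  \det M = M (inord 0) (inord 0) * M (inord 1) (inord 1) - M (inord 0) (inord 1) * M (inord 1) (inord 0).
Proof.
rewrite {1}[M]mx_inord (expand_det_row _ 0) !big_ord_recl big_ord0 /cofactor !det_mx11 !mxE /=.
ring.
Qed.

Definition det3_expr (f : nat -> nat -> K) : K :=
  f 0%N 0%N * (f 1%N 1%N * f 2%N 2%N - f 1%N 2%N * f 2%N 1%N)
  - f 0%N 1%N * (f 1%N 0%N * f 2%N 2%N - f 1%N 2%N * f 2%N 0%N)
  + f 0%N 2%N * (f 1%N 0%N * f 2%N 1%N - f 1%N 1%N * f 2%N 0%N).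

Lemma det3 (M : 'M[K]_3) : \det M = det3_expr (fun i j => M (inord i) (inord j)).
Proof.
rewrite {1}[M]mx_inord (expand_det_row _ 0) !big_ord_recl big_ord0 /cofactor !det2 !mxE /= !inordK //=.
rewrite /det3_expr; ring.
Qed.

Definition det4_expr (f : nat -> nat -> K) : K :=
  f 0%N 0%N * det3_expr (fun i j => f i.+1 (bump 0 j))
  - f 0%N 1%N * det3_expr (fun i j => f i.+1 (bump 1 j))
  + f 0%N 2%N * det3_expr (fun i j => f i.+1 (bump 2 j))
  - f 0%N 3%N * det3_expr (fun i j => f i.+1 (bump 3 j)).

Lemma det4 (M : 'M[K]_4) : \det M = det4_expr (fun i j => M (inord i) (inord j)).
Proof.
rewrite {1}[M]mx_inord (expand_det_row _ 0) !big_ord_recl big_ord0 /cofactor !det3.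
rewrite /det4_expr /det3_expr !mxE /= !inordK //=; ring.
Qed.

End SmallDeterminants.

Section PolynomialFunctions.
Context {l : nat}.

Definition polyfun (f : (Idx l -> Vec 2) -> R) : Prop :=
  exists P : Defs.poly (Idx l * Idx 2), forall p, peval (fun v => p v.1 v.2) P = f p.

Lemma polyfun_ext {f g} : polyfun f -> f =1 g -> polyfun g.
Proof. by move=> [P HP] fg; exists P => p; rewrite HP fg. Qed.

Lemma polyfun_const c : polyfun (fun _ => c).
Proof. by exists (PConst c). Qed.

Lemma polyfun_coord i j : polyfun (fun p => p i j).
Proof. by exists (PVar (i, j)). Qed.

Lemma polyfun_add {f g} : polyfun f -> polyfun g -> polyfun (fun p => f p + g p).
Proof. by case=> P HP [Q HQ]; exists (PAdd P Q) => p /=; rewrite HP HQ. Qed.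

Lemma polyfun_mul {f g} : polyfun f -> polyfun g -> polyfun (fun p => f p * g p).
Proof. by case=> P HP [Q HQ]; exists (PMul P Q) => p /=; rewrite HP HQ. Qed.

Lemma polyfun_sum (I : Type) (s : seq I) (F : I -> (Idx l -> Vec 2) -> R) :
  (forall i, polyfun (F i)) -> polyfun (fun p => \sum_(i <- s) F i p).
Proof.
move=> PF; elim: s => [|i s IHs].
  by apply: polyfun_ext (polyfun_const 0) _ => p; rewrite big_nil.
by apply: polyfun_ext (polyfun_add (PF i) IHs) _ => p; rewrite big_cons.
Qed.

Lemma polyfun_prod (I : Type) (s : seq I) (F : I -> (Idx l -> Vec 2) -> R) :
  (forall i, polyfun (F i)) -> polyfun (fun p => \prod_(i <- s) F i p).
Proof.
move=> PF; elim: s => [|i s IHs].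
  by apply: polyfun_ext (polyfun_const 1) _ => p; rewrite big_nil.
by apply: polyfun_ext (polyfun_mul (PF i) IHs) _ => p; rewrite big_cons.
Qed.

Lemma polyfun_det n (M : (Idx l -> Vec 2) -> 'M[R]_n) :
  (forall i j, polyfun (fun p => M p i j)) -> polyfun (fun p => \det (M p)).
Proof.
move=> PM; apply: polyfun_sum => s.
apply: polyfun_mul; first exact: polyfun_const.
by apply: polyfun_prod => i; apply: PM.
Qed.

Lemma proper_zero_set f p0 : polyfun f -> f p0 != 0 ->
  proper_algebraic_subset (fun p => f p = 0).
Proof.
move=> [P HP] /eqP fp0_neq0; split; last by exists p0.
exists [:: P] => p; split=> [fp0 | Pp0].
  by constructor; [rewrite HP | constructor].
by inversion Pp0; rewrite -HP.
Qed.

End PolynomialFunctions.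

Section CoefficientMatrix.
Context {l : nat}.
Implicit Types (p : Idx l -> Vec 2) (A : Idx l -> Idx 2 -> R).

Definition coef_row p A (i : Idx l) (k : nat) : R :=
  nth 0 [:: A i j0; A i j1; -2 * A i j0 * p i j0; -2 * A i j1 * p i j1] k.

Definition coefmx p A : 'M[R]_(l, 4) := \matrix_(i, k) coef_row p A (idx_of_ord i) k.

Definition monomials (x : Vec 2) : 'cV[R]_4 := \col_k nth 0 [:: x j0 ^+ 2; x j1 ^+ 2; x j0; x j1] k.

Definition G_const p A : 'cV[R]_l :=
  \col_i (A (idx_of_ord i) j0 * p (idx_of_ord i) j0 ^+ 2
          + A (idx_of_ord i) j1 * p (idx_of_ord i) j1 ^+ 2).

Lemma G_coefmx p A x : G p A x = vec_of_col (coefmx p A *m monomials x + G_const p A).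
Proof.
apply: functional_extensionality => i.
rewrite /G /vec_of_col !mxE !big_ord_recl big_ord0 !mxE /= /coef_row /= ord_of_idxK.
by rewrite !RealsE /=; ring.
Qed.

Lemma polyfun_coefmx A i k : polyfun (fun p => coefmx p A i k).
Proof.
suff : polyfun (fun p => coef_row p A (idx_of_ord i) k) by move/polyfun_ext; apply=> p; rewrite mxE.
case: k => [[|[|[|[|k]]]] /= _]; rewrite /coef_row /=;
  by [apply: polyfun_const | apply: polyfun_mul; [apply: polyfun_const | apply: polyfun_coord]].
Qed.

End CoefficientMatrix.

Lemma exists_unitmx_mulmx_eq (F : comUnitRingType) m n (X : 'M[F]_(n, m)) (K1 K2 : 'M[F]_(m, n)) :
  X *m K1 \in unitmx -> X *m K2 \in unitmx -> exists2 T, T \in unitmx & T *m K2 = K1.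
Proof.
move=> XK1u XK2u.
set W1 := invmx (X *m K1); set W2 := invmx (X *m K2).
have W1K : (X *m K1) *m W1 = 1%:M by apply: mulmxV.
have W2K : W2 *m (X *m K2) = 1%:M by apply: mulVmx.
have XDW1X : X *m ((K2 - K1) *m (W1 *m X)) = X *m K2 *m W1 *m X - X.
  by rewrite !mulmxA mulmxBr !mulmxBl W1K mul1mx.
exists (1%:M + (K1 - K2) *m (W2 *m X)).
  suff /mulmx1_unit[] : (1%:M + (K1 - K2) *m (W2 *m X)) *m (1%:M + (K2 - K1) *m (W1 *m X)) = 1%:M by [].
  have W2XDW1X : W2 *m (X *m K2 *m W1 *m X - X) = W1 *m X - W2 *m X.
    by rewrite mulmxBr mulmxA mulmxA W2K mul1mx.
  rewrite mulmxDl mul1mx mulmxDr mulmx1 -!mulmxA XDW1X W2XDW1X mulmxBr.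
  by rewrite -opprB mulNmx [_ + (_ - _)]addrC !subrK.
by rewrite mulmxDl mul1mx -!mulmxA W2K mulmx1 addrC subrK.
Qed.

Lemma affine_equiv_G_rowsub {l} (r : 'I_4 -> 'I_l) p q A B :
  rowsub r (coefmx p A) \in unitmx -> rowsub r (coefmx q B) \in unitmx ->
  affine_equiv (G p A) (G q B).
Proof.
rewrite (rowsubE r (coefmx p A)) (rowsubE r (coefmx q B)).
move=> /exists_unitmx_mulmx_eq /[apply] -[T Tu TKq].
exists T, (G_const p A - T *m G_const q B), 1%:M, 0; split=> [//||x]; first exact: unitmx1.
by rewrite aff1 !G_coefmx /aff vec_of_colK mulmxDr mulmxA TKq addrCA subrK.
Qed.

Definition minor2 {l} (A : Idx l -> Idx 2 -> R) (r s : 'I_l) :=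
  A (idx_of_ord r) j0 * A (idx_of_ord s) j1 - A (idx_of_ord r) j1 * A (idx_of_ord s) j0.

Lemma minor2xx l (A : Idx l -> Idx 2 -> R) r : minor2 A r r = 0.
Proof. by rewrite /minor2 mulrC subrr. Qed.

Lemma rank2_minor2 {l} {A : Idx l -> Idx 2 -> R} (r : 'I_l) :
  (forall i j, A i j <> 0) -> rank2 A -> exists s, minor2 A r s != 0.
Proof.
move=> nzA rkA; apply/existsP; apply: contraT; rewrite negb_exists => /forallP minor0.
suff [_ /eqP] : A (idx_of_ord r) j1 = 0 /\ - A (idx_of_ord r) j0 = 0.
  by rewrite oppr_eq0 => /eqP /nzA.
apply: rkA => i; have := minor0 (ord_of_idx i); rewrite negbK /minor2 ord_of_idxK => /eqP m0.
by rewrite RplusE !RmultE R0E -[RHS]oppr0 -m0; ring.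
Qed.

Lemma exists_ord_notin {l} (s : seq 'I_l) : (size s < l)%N -> exists y : 'I_l, y \notin s.
Proof.
move=> lt_s_l; apply/existsP; rewrite -negb_forall; apply: contraTN lt_s_l => /forallP s_all.
have : (#|'I_l| <= #|s|)%N by apply: subset_leq_card; apply/subsetP => y _; apply: s_all.
by rewrite card_ord -leqNgt => /leq_trans; apply; apply: card_size.
Qed.

Section AxisPoints.
Context {l : nat}.
Implicit Types (A : Idx l -> Idx 2 -> R).

Definition axis_points (s0 s1 : 'I_l) : Idx l -> Vec 2 := fun i j =>
  if ord_of_idx i == s0 then (if proj1_sig j == 0%N then 1 else 0)
  else if ord_of_idx i == s1 then (if proj1_sig j == 1%N then 1 else 0) else 0.

Definition rows4 (r0 r1 r2 r3 : 'I_l) : 'I_4 -> 'I_l := fun k => nth r0 [:: r0; r1; r2; r3] k.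

Lemma det_axis_points A (r0 r1 s0 s1 : 'I_l) : uniq [:: r0; r1; s0; s1] ->
  \det (rowsub (rows4 r0 r1 s0 s1) (coefmx (axis_points s0 s1) A)) =
  4 * A (idx_of_ord s0) j0 * A (idx_of_ord s1) j1 * minor2 A r0 r1.
Proof.
rewrite /= !inE !negb_or => /and4P[/and3P[h01 h02 h03] /andP[h12 h13] h23 _].
rewrite det4 /det4_expr /det3_expr !mxE /rows4 /bump /= !inordK //= /coef_row /axis_points /=.
rewrite !idx_of_ordK [s1 == s0]eq_sym !eqxx.
rewrite !(negbTE h02, negbTE h03, negbTE h12, negbTE h13, negbTE h23) /= /minor2.
ring.
Qed.

Lemma det_axis_points_interleaved A (r0 r1 s0 s1 : 'I_l) : uniq [:: r0; s0; r1; s1] ->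
  \det (rowsub (rows4 r0 s0 r1 s1) (coefmx (axis_points s0 s1) A)) =
  - (4 * A (idx_of_ord s0) j0 * A (idx_of_ord s1) j1 * minor2 A r0 r1).
Proof.
rewrite /= !inE !negb_or => /and4P[/and3P[h02 h01 h03] /andP[h21 h23] h13 _].
rewrite det4 /det4_expr /det3_expr !mxE /rows4 /bump /= !inordK //= /coef_row /axis_points /=.
rewrite !idx_of_ordK [s1 == s0]eq_sym [r1 == s0]eq_sym !eqxx.
rewrite !(negbTE h02, negbTE h03, negbTE h21, negbTE h13, negbTE h23) /= /minor2.
ring.
Qed.

End AxisPoints.

Definition generically_A_equivalent {l} (A B : Idx l -> Idx 2 -> R) : Prop :=
  exists SA SB : (Idx l -> Vec 2) -> Prop,
    proper_algebraic_subset SA /\ proper_algebraic_subset SB /\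
    forall p q : Idx l -> Vec 2, ~ SA p -> ~ SB q -> A_equivalent (G p A) (G q B).

Lemma generically_A_equivalent_of_polyfun {l} {A B : Idx l -> Idx 2 -> R} {fA fB pA pB} :
  polyfun fA -> polyfun fB -> fA pA != 0 -> fB pB != 0 ->
  (forall p q, fA p != 0 -> fB q != 0 -> affine_equiv (G p A) (G q B)) ->
  generically_A_equivalent A B.
Proof.
move=> PfA PfB fApA fBpB eqvAB.
exists (fun p => fA p = 0), (fun q => fB q = 0).
split; first exact: proper_zero_set PfA fApA.
split; first exact: proper_zero_set PfB fBpB.
by move=> p q /eqP fAp /eqP fBq; apply/affine_equiv_A_equivalent/eqvAB.
Qed.

Lemma polyfun_det_rowsub {l} (r : 'I_4 -> 'I_l) A : polyfun (fun p => \det (rowsub r (coefmx p A))).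
Proof.
apply: polyfun_det => i j.
by apply: polyfun_ext (polyfun_coefmx A (r i) j) _ => p; rewrite !mxE.
Qed.

Lemma exists_rows4_det_neq0 {l} {A B : Idx l -> Idx 2 -> R} : (3 < l)%N ->
  (forall i j, A i j <> 0) -> (forall i j, B i j <> 0) -> rank2 A -> rank2 B ->
  exists r pA pB, \det (rowsub r (coefmx pA A)) != 0 /\ \det (rowsub r (coefmx pB B)) != 0.
Proof.
move=> l_gt3 nzA nzB rkA rkB.
pose r0 : 'I_l := Ordinal (ltn_trans (isT : 0 < 3)%N l_gt3).
have [a ha] := rank2_minor2 r0 nzA rkA; have [b hb] := rank2_minor2 r0 nzB rkB.
have r0a : r0 != a by apply: contraNneq ha => <-; rewrite minor2xx.
have r0b : r0 != b by apply: contraNneq hb => <-; rewrite minor2xx.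
have nz4 : 4 != 0 :> R by rewrite pnatr_eq0.
have nzA' i j : A i j != 0 by apply/eqP.
have nzB' i j : B i j != 0 by apply/eqP.
case: (eqVneq a b) => [eq_ab | ab].
- rewrite -eq_ab in hb.
  have [s0 hs0] := exists_ord_notin [:: r0; a] (ltnW l_gt3).
  have [s1 hs1] := exists_ord_notin [:: r0; a; s0] l_gt3.
  have u : uniq [:: r0; a; s0; s1].
    by rewrite (rcons_uniq [:: r0; a; s0]) hs1 (rcons_uniq [:: r0; a]) hs0 /= inE r0a.
  exists (rows4 r0 a s0 s1), (axis_points s0 s1), (axis_points s0 s1).
  by rewrite !det_axis_points // !mulf_neq0.
- have [s hs] := exists_ord_notin [:: r0; a; b] l_gt3.
  have u : uniq [:: r0; a; b; s].
    by rewrite (rcons_uniq [:: r0; a; b]) hs /= !inE !negb_or r0a r0b ab.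
  exists (rows4 r0 a b s), (axis_points b s), (axis_points a s).
  by rewrite det_axis_points // det_axis_points_interleaved // oppr_eq0 !mulf_neq0.
Qed.

Lemma generically_A_equivalent_ge4 l (A B : Idx l -> Idx 2 -> R) : (3 < l)%N ->
  (forall i j, A i j <> 0) -> (forall i j, B i j <> 0) -> rank2 A -> rank2 B ->
  generically_A_equivalent A B.
Proof.
move=> l_gt3 nzA nzB rkA rkB.
have [r [pA [pB [hpA hpB]]]] := exists_rows4_det_neq0 l_gt3 nzA nzB rkA rkB.
apply: generically_A_equivalent_of_polyfun (polyfun_det_rowsub r A) (polyfun_det_rowsub r B) hpA hpB _.
by move=> p q hp hq; apply: (affine_equiv_G_rowsub r); rewrite unitmxE unitfE.
Qed.

Section CofactorVector.
Context {F : comNzRingType} {n : nat}.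

Definition cofactor_vec (K : 'M[F]_(n, n.+1)) : 'cV[F]_n.+1 :=
  \col_k ((-1) ^+ k * \det (col' k K)).

(* Laplace expansion along the first row of [K] with its [i]-th row repeated on top. *)
Lemma mulmx_cofactor_vec (K : 'M[F]_(n, n.+1)) : K *m cofactor_vec K = 0.
Proof.
apply/matrixP => i z; rewrite !mxE.
pose M : 'M[F]_n.+1 := \matrix_(a, b) K (odflt i (unlift 0 a)) b.
have M0 : M 0 =1 K i by move=> k; rewrite mxE unlift_none.
have Mlift a : M (lift 0 a) =1 K a by move=> k; rewrite mxE liftK.
have detM : \det M = 0 by apply: (determinant_alternate (neq_lift 0 i)) => k; rewrite M0 Mlift.
apply: etrans detM; rewrite (expand_det_row _ 0); apply: eq_bigr => k _.
rewrite M0 /cofactor add0n mxE; congr (_ * (_ * \det _)).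
by apply/matrixP => a b; rewrite !mxE liftK.
Qed.

End CofactorVector.

Lemma big_ord4 (V : nmodType) (F : 'I_4 -> V) : \sum_k F k = F (inord 0) + F (inord 1) + F (inord 2) + F (inord 3).
Proof.
rewrite !big_ord_recl big_ord0 addr0 !addrA.
by congr (_ + _ + _ + _); congr F; apply: val_inj; rewrite /= inordK.
Qed.

Lemma idx_of_ord0 : idx_of_ord ord0 = j0.
Proof. by congr exist; apply: le_unique. Qed.

Lemma idx_of_ord1 : idx_of_ord (lift ord0 (ord0 : 'I_1)) = j1.
Proof. by congr exist; apply: le_unique. Qed.

Definition diag2 (d0 d1 : R) : 'M[R]_2 := diag_mx (\row_j nth 0 [:: d0; d1] j).
Definition col2 (e0 e1 : R) : 'cV[R]_2 := \col_j nth 0 [:: e0; e1] j.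

Lemma unitmx_diag2 d0 d1 : d0 != 0 -> d1 != 0 -> diag2 d0 d1 \in unitmx.
Proof.
by move=> d0_neq0 d1_neq0; rewrite unitmxE det_diag !big_ord_recl big_ord0 !mxE /= mulr1 unitfE mulf_neq0.
Qed.

Lemma aff_diag2_j0 d0 d1 e0 e1 z : aff (diag2 d0 d1) (col2 e0 e1) z j0 = e0 + d0 * z j0.
Proof. by rewrite affE !big_ord_recl big_ord0 !mxE /= idx_of_ord0 mulr1n mulr0n; ring. Qed.

Lemma aff_diag2_j1 d0 d1 e0 e1 z : aff (diag2 d0 d1) (col2 e0 e1) z j1 = e1 + d1 * z j1.
Proof. by rewrite affE !big_ord_recl big_ord0 !mxE /= idx_of_ord1 mulr1n mulr0n; ring. Qed.

Definition normal_form3 (z : Vec 2) : Vec 3 :=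
  vec_of_col (\col_k nth 0 [:: z j0 ^+ 2; z j1 ^+ 2; z j0 + z j1] k).

Section NormalForm3.
Variables (p : Idx 3 -> Vec 2) (A : Idx 3 -> Idx 2 -> R).

Let v k : R := cofactor_vec (coefmx p A) (inord k) 0.

Lemma coefmx3_kernel i :
  A i j0 * v 0 + A i j1 * v 1 - 2 * A i j0 * p i j0 * v 2 - 2 * A i j1 * p i j1 * v 3 = 0.
Proof.
have /matrixP/(_ (ord_of_idx i) 0) := mulmx_cofactor_vec (coefmx p A).
rewrite !mxE big_ord4 !mxE !inordK //= /coef_row /= ord_of_idxK /v => <-.
by rewrite !mxE !inordK //; ring.
Qed.

(* Under [x = U3 z + e3] the coefficients of [z0] and [z1] in [G_(p,A)] coincide, by
   [coefmx3_kernel]. *)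
Definition U3 := diag2 (v 2) (- v 3).
Definition e3 := col2 (v 0 / (2 * v 2)) (v 1 / (2 * v 3)).

Definition T3 : 'M[R]_3 := \matrix_(i, k)
  let a := A (idx_of_ord i) j0 in let b := A (idx_of_ord i) j1 in
  nth 0 [:: v 2 ^+ 2 * a; v 3 ^+ 2 * b; v 0 * a - 2 * v 2 * a * p (idx_of_ord i) j0] k.
Definition c3 := col_of_vec (G p A (aff U3 e3 (fun _ => 0))).

Lemma G_normal_form3 z : v 2 != 0 -> v 3 != 0 ->
  G p A (aff U3 e3 z) = aff T3 c3 (normal_form3 z).
Proof.
move=> v2_neq0 v3_neq0; apply: functional_extensionality => i.
rewrite [RHS]affE /c3 /vec_of_col mxE ord_of_idxK /G !aff_diag2_j0 !aff_diag2_j1.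
rewrite !big_ord_recl big_ord0 /normal_form3 /vec_of_col !mxE /= ord_of_idxK !RealsE /=.
rewrite !mulr0 !addr0 -[RHS]subr0 -(mulr0 (z j1)) -(coefmx3_kernel i).
by field; rewrite v2_neq0 v3_neq0.
Qed.

Lemma det_T3 : \det T3 = - (v 2 * v 3) ^+ 3.
Proof.
rewrite det3 /det3_expr !mxE ?inordK //= /v !mxE ?inordK //=.
rewrite !det3 /det3_expr !mxE /= ?inordK //= /bump /= /coef_row /=.
ring.
Qed.

Lemma affine_equiv_G_normal_form3 : v 2 != 0 -> v 3 != 0 -> affine_equiv (G p A) normal_form3.
Proof.
move=> v2_neq0 v3_neq0; exists T3, c3, U3, e3; split.
- by rewrite unitmxE unitfE det_T3 oppr_eq0 expf_neq0 // mulf_neq0.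
- by rewrite unitmx_diag2 // oppr_eq0.
- by move=> z; apply: G_normal_form3.
Qed.

Definition sigma3 := v 2 * v 3.

End NormalForm3.

Definition corner_point (t : nat) : Idx 3 -> Vec 2 :=
  fun i _ => if proj1_sig i == t then 1 else 0.

Lemma sigma3_corner_point (A : Idx 3 -> Idx 2 -> R) (s t : nat) : (s, t) \in [:: (1, 2); (2, 1)]%N ->
  sigma3 (corner_point t) A =
  -4 * A (idx_of_ord (inord t)) j0 * A (idx_of_ord (inord t)) j1 * minor2 A (inord 0) (inord s) ^+ 2.
Proof.
rewrite !inE => /orP[] /eqP[-> ->];
  rewrite /sigma3 !mxE ?inordK //= !det3 /det3_expr !mxE /= ?inordK //= /bump /=;
  rewrite /coef_row /corner_point /= ?inordK //= /minor2; ring.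
Qed.

Lemma exists_sigma3_neq0 {A : Idx 3 -> Idx 2 -> R} :
  (forall i j, A i j <> 0) -> rank2 A -> exists p, sigma3 p A != 0.
Proof.
move=> nzA rkA; have [s] := rank2_minor2 (inord 0) nzA rkA.
rewrite -(inord_val s); case: s => [[|[|[|//]]] /= _] minor_neq0.
- by rewrite minor2xx eqxx in minor_neq0.
- exists (corner_point 2); rewrite (@sigma3_corner_point _ 1) //.
  by rewrite !mulf_neq0 ?expf_neq0 ?oppr_eq0 ?pnatr_eq0 //; apply/eqP; apply: nzA.
- exists (corner_point 1); rewrite (@sigma3_corner_point _ 2) //.
  by rewrite !mulf_neq0 ?expf_neq0 ?oppr_eq0 ?pnatr_eq0 //; apply/eqP; apply: nzA.
Qed.

Lemma polyfun_cofactor_vec (A : Idx 3 -> Idx 2 -> R) k :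
  polyfun (fun p => cofactor_vec (coefmx p A) k 0).
Proof.
have Pdet : polyfun (fun p => \det (col' k (coefmx p A))).
  apply: polyfun_det => i j.
  by apply: polyfun_ext (polyfun_coefmx A i (lift k j)) _ => p; rewrite [RHS]mxE.
by apply: polyfun_ext (polyfun_mul (polyfun_const _) Pdet) _ => p; rewrite [RHS]mxE.
Qed.

Lemma generically_A_equivalent_3 (A B : Idx 3 -> Idx 2 -> R) :
  (forall i j, A i j <> 0) -> (forall i j, B i j <> 0) -> rank2 A -> rank2 B ->
  generically_A_equivalent A B.
Proof.
move=> nzA nzB rkA rkB.
have [pA sigmaA] := exists_sigma3_neq0 nzA rkA.
have [pB sigmaB] := exists_sigma3_neq0 nzB rkB.
have Psigma C : polyfun (fun p => sigma3 p C) by apply: polyfun_mul; apply: polyfun_cofactor_vec.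
apply: (generically_A_equivalent_of_polyfun (Psigma A) (Psigma B) sigmaA sigmaB) => p q.
rewrite /sigma3 !mulf_eq0 !negb_or => /andP[pA2 pA3] /andP[qB2 qB3].
apply: affine_equiv_trans (affine_equiv_G_normal_form3 _ _ pA2 pA3) _.
exact: affine_equiv_sym (affine_equiv_G_normal_form3 _ _ qB2 qB3).
Qed.

Local Close Scope ring_scope.

Theorem corollary2p1 (l : nat) (hl : Peano.le 3 l)
  (A B : Idx l -> Idx 2 -> R)
  (hA : forall i j, A i j <> 0) (hB : forall i j, B i j <> 0)
  (rA : rank2 A) (rB : rank2 B) :
  exists SA SB : (Idx l -> Vec 2) -> Prop,
    proper_algebraic_subset SA /\ proper_algebraic_subset SB /\
    forall p q : Idx l -> Vec 2, ~ SA p -> ~ SB q ->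
      A_equivalent (G p A) (G q B).
Proof.
move/leP: hl; rewrite leq_eqVlt => /orP[/eqP l3 | l_gt3].
  by subst l; apply: generically_A_equivalent_3.
exact: generically_A_equivalent_ge4.
Qed.
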